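(* For every normal PO-dilator $W$ and every partial order $X$, the Kruskal fixed point $(\mathcal T W(X),\iota_X,\kappa_X)$ of $W$ over $X$ is initial.
   Context: A quasi embedding between partial orders $X,Y$ is a function $f$ with $f(x)\leq_Y f(y)\Rightarrow x\leq_X y$; an embedding also satisfies the converse. $\mathrm{PO}$ is the category of partial orders and quasi embeddings. $[X]^{<\omega}$ denotes the finite subsets of $X$, with $[f]^{<\omega}(a)=\{f(x)\mid x\in a\}$; subsets of partial orders are regarded as suborders and $\iota_a$ denotes an inclusion map. A PO-dilator is a functor $W:\mathrm{PO}\to\mathrm{PO}$ mapping embeddings to embeddings, with a natural transformation $\operatorname{supp}^W:W\Rightarrow[\cdot]^{<\omega}$ such that for every embedding $f:X\to Y$, $\operatorname{rng}(W(f))=\{\sigma\in W(Y)\mid\operatorname{supp}^W_Y(\sigma)\subseteq\operatorname{rng}(f)\}$. For finite $a,b\subseteq X$, $a\leq^{\mathrm{fin}}_X b$ iff every $x\in a$ has some $y\in b$ with $x\leq_X y$ ($z\leq^{\mathrm{fin}}_X b$ means $\{z\}\leq^{\mathrm{fin}}_X b$). $W$ is normal if $\sigma\leq_{W(X)}\tau$ implies $\operatorname{supp}^W_X(\sigma)\leq^{\mathrm{fin}}_X\operatorname{supp}^W_X(\tau)$. For $\sigma\in W(X)$, $\sigma=_{\mathrm{NF}}W(\iota_a)(\sigma_0)$ means $a\in[X]^{<\omega}$, $\sigma_0\in W(a)$, $\sigma=W(\iota_a)(\sigma_0)$ and $\operatorname{supp}^W_a(\sigma_0)=a$; each $\sigma$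 has exactly one such representation. For a normal PO-dilator $W$ and partial order $X$, the set $\mathcal T W(X)$ and relation $\leq_{\mathcal T W(X)}$ are defined by simultaneous recursion. Terms: (i) $\overline x$ for each $x\in X$; (ii) for each finite $a\subseteq\mathcal T W(X)$ on which the restriction of $\leq_{\mathcal T W(X)}$ is a partial order, and each $\sigma\in W(a)$ with $\operatorname{supp}^W_a(\sigma)=a$, a term $\circ(a,\sigma)$. Relation: $s\leq_{\mathcal T W(X)}t$ iff (i') $s=\overline x$, $t=\overline y$, $x\leq_X y$; or (ii') $t=\circ(b,\tau)$ and $s\leq_{\mathcal T W(X)}t'$ for some $t'\in b$; or (iii') $s=\circ(a,\sigma)$, $t=\circ(b,\tau)$, the restriction of $\leq_{\mathcal T W(X)}$ to $a\cup b$ is a partial order, and $W(\iota_a)(\sigma)\leq_{W(a\cup b)}W(\iota_b)(\tau)$ for the inclusions into $a\cup b$. (The recursion is along the length $l(\overline x)=0$, $l(\circ(a,\sigma))=1+\sum_{r\in a}2\,l(r)$.) $\leq_{\mathcal T W(X)}$ is a partial order. Define $\iota_X(x)=\overline x$ and $\kappa_X:W(\mathcal T W(X))\to\mathcal T W(X)$, $\kappa_X(\sigma)=\circ(a,\sigma_0)$ for $\sigma=_{\mathrm{NF}}W(\iota_a)(\sigma_0)$. A Kruskal fixed point of $W$ over $X$ is a partial order $Z$ with functions $\iota:X\to Z$, $\kappa:W(Z)\to Z$ such that $\operatorname{rng}(\iota)\cap\operatorname{rng}(\kappa)=\emptyset$ and: $\iota(x)\leq_Z\iota(y)\Rightarrow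 x\leq_X y$; $\iota(x)\leq_Z\kappa(\tau)$ iff $\iota(x)\leq^{\mathrm{fin}}_Z\operatorname{supp}^W_Z(\tau)$; $\kappa(\sigma)\not\leq_Z\iota(y)$; $\kappa(\sigma)\leq_Z\kappa(\tau)$ iff ($\sigma\leq_{W(Z)}\tau$ or $\kappa(\sigma)\leq^{\mathrm{fin}}_Z\operatorname{supp}^W_Z(\tau)$). It is initial if for every Kruskal fixed point $(Z',\iota',\kappa')$ of $W$ over $X$ there is a unique quasi embedding $f:Z\to Z'$ with $f\circ\iota=\iota'$ and $f\circ\kappa=\kappa'\circ W(f)$. *)

From Stdlib Require Import List FunctionalExtensionality PropExtensionality ProofIrrelevance.
From mathcomp Require Import ssreflect ssrfun ssrbool eqtype ssrnat seq fintype bigop.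

Set Implicit Arguments.
Unset Strict Implicit.
Unset Printing Implicit Defensive.

Record PO := mkPO {
  car :> Type;
  ple : car -> car -> Prop;
  ple_refl : forall x, ple x x;
  ple_trans : forall x y z, ple x y -> ple y z -> ple x z;
  ple_antisym : forall x y, ple x y -> ple y x -> x = y }.
Arguments ple {p} _ _.

Definition quasi_emb (X Y : PO) (f : X -> Y) : Prop :=
  forall x y, ple (f x) (f y) -> ple x y.

Definition embedding (X Y : PO) (f : X -> Y) : Prop :=
  forall x y, ple (f x) (f y) <-> ple x y.

(* morphisms of the category PO: quasi embeddings *)
Record qemb (X Y : PO) := QEmb { qfun :> X -> Y; qfun_quasi : quasi_emb qfun }.

Definition qid (X : PO) : qemb X X := @QEmb X X (fun x => x) (fun x y h => h).

Definition qcomp (X Y Z : PO) (g : qemb Y Z) (f : qemb X Y) : qemb X Z :=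
  @QEmb X Z (fun x => g (f x))
    (fun x y h => @qfun_quasi X Y f x y (@qfun_quasi Y Z g (f x) (f y) h)).

Definition finite_set (T : Type) (a : T -> Prop) : Prop :=
  exists l : list T, forall x, a x -> List.In x l.

Definition fin_le (X : PO) (a b : X -> Prop) : Prop :=
  forall x, a x -> exists y, b y /\ ple x y.

Record PO_dilator := {
  Wob :> PO -> PO;
  Wmor : forall X Y : PO, qemb X Y -> qemb (Wob X) (Wob Y);
  Wmor_id : forall (X : PO) (s : Wob X), Wmor (qid X) s = s;
  Wmor_comp : forall (X Y Z : PO) (g : qemb Y Z) (f : qemb X Y) (s : Wob X),
      Wmor (qcomp g f) s = Wmor g (Wmor f s);
  Wmor_emb : forall (X Y : PO) (f : qemb X Y), embedding f -> embedding (Wmor f);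
  supp : forall X : PO, Wob X -> X -> Prop;
  supp_finite : forall (X : PO) (s : Wob X), finite_set (supp s);
  supp_nat : forall (X Y : PO) (f : qemb X Y) (s : Wob X) (y : Y),
      supp (Wmor f s) y <-> exists x, supp s x /\ f x = y;
  supp_rng : forall (X Y : PO) (f : qemb X Y), embedding f ->
      forall t : Wob Y, (exists s, Wmor f s = t) <-> (forall y, supp t y -> exists x, f x = y)
}.
Arguments Wmor p {X Y} _.
Arguments supp p {X} _ _.

Definition normal (W : PO_dilator) : Prop :=
  forall (X : PO) (s t : W X), ple s t -> fin_le (supp W s) (supp W t).

Definition KruskalFP (W : PO_dilator) (X Z : PO) (io : X -> Z) (ka : W Z -> Z) : Prop :=
  (forall x s, io x <> ka s) /\
  (forall x y, ple (io x) (io y) -> ple x y) /\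
  (forall x t, ple (io x) (ka t) <-> fin_le (fun z => z = io x) (supp W t)) /\
  (forall s y, ~ ple (ka s) (io y)) /\
  (forall s t, ple (ka s) (ka t) <->
               (ple s t \/ fin_le (fun z => z = ka s) (supp W t))).

Arguments KruskalFP W {X Z} io ka.

Definition KruskalFP_initial (W : PO_dilator) (X Z : PO) (io : X -> Z) (ka : W Z -> Z) : Prop :=
  forall (Z' : PO) (io' : X -> Z') (ka' : W Z' -> Z'), KruskalFP W io' ka' ->
    exists f : qemb Z Z',
      ((forall x, f (io x) = io' x) /\ (forall s, f (ka s) = ka' (Wmor W f s))) /\
      (forall g : qemb Z Z',
          (forall x, g (io x) = io' x) -> (forall s, g (ka s) = ka' (Wmor W g s)) ->
          forall z, g z = f z).

Arguments KruskalFP_initial W {X Z} io ka.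

Record finPO (n : nat) := {
  frel : 'I_n -> 'I_n -> Prop;
  frel_refl : forall i, frel i i;
  frel_trans : forall i j k, frel i j -> frel j k -> frel i k;
  frel_antisym : forall i j, frel i j -> frel j i -> i = j }.

Definition PO_of_fin (n : nat) (P : finPO n) : PO :=
  @mkPO 'I_n (frel P) (@frel_refl n P) (@frel_trans n P) (@frel_antisym n P).

Section Quot.
Variables (A : Type) (R : A -> A -> Prop).
Hypothesis Rr : forall a, R a a.
Hypothesis Rt : forall a b c, R a b -> R b c -> R a c.

Definition qclass (a : A) : A -> Prop := fun b => R a b /\ R b a.
Definition qcar : Type := {S : A -> Prop | exists a, S = qclass a}.
Definition qle (S T : qcar) : Prop :=
  exists a b, proj1_sig S a /\ proj1_sig T b /\ R a b.

Lemma qle_refl (S : qcar) : qle S S.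
Proof.
case: S => S HS; case: (HS) => a Ha; exists a, a; rewrite /= Ha /qclass.
by do !split; apply: Rr.
Qed.

Lemma qle_trans (S T U : qcar) : qle S T -> qle T U -> qle S U.
Proof.
case: S => S HS; case: T => T HT; case: U => U HU; rewrite /qle /=.
case: (HT) => t Ht'; rewrite Ht' /qclass.
move=> [a [b [Ha [[Hb1 Hb2] Hab]]]] [b' [c [[Hb'1 Hb'2] [Hc Hbc]]]].
exists a, c; do !split => //.
apply: (Rt Hab); apply: (Rt Hb2); apply: (Rt Hb'1); exact: Hbc.
Qed.

Lemma qle_antisym (S T : qcar) : qle S T -> qle T S -> S = T.
Proof.
case: S => S [s HS]; case: T => T [t HT] /=; subst S T.
move=> [a [b [[Hsa Has] [[Htb Hbt] Hab]]]] [b' [a' [[Htb' Hbt'] [[Hsa' Has'] Hba]]]].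
have st : R s t by apply: (Rt Hsa); apply: (Rt Hab).
have ts : R t s by apply: (Rt Htb'); apply: (Rt Hba).
have E : qclass s = qclass t.
  apply: functional_extensionality => x; apply: propositional_extensionality.
  rewrite /qclass; split=> [[h1 h2]|[h1 h2]]; split.
  - exact: Rt ts h1.
  - exact: Rt h2 st.
  - exact: Rt st h1.
  - exact: Rt h2 ts.
apply: eq_sig_hprop => /=; last exact: E.
by move=> ? ? ?; apply: proof_irrelevance.
Qed.

Definition quotPO : PO := @mkPO qcar qle qle_refl qle_trans qle_antisym.
End Quot.

(*   Terms circ(a, sigma) are encoded by raw trees                     *)
(*   rnode n P sigma c, where c : 'I_n -> raw enumerates the set a,    *)
(*   P is the (finite) partial order on the indices induced from a and *)
(*   sigma : W(P) corresponds to sigma_0 in W(a).  Raw trees that      *)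
(*   differ only by re-indexing are identified by a quotient.          *)

Section TW.
Variables (W : PO_dilator) (X : PO).

Inductive raw : Type :=
| rleaf : X -> raw
| rnode : forall (n : nat) (P : finPO n), W (PO_of_fin P) -> ('I_n -> raw) -> raw.

Fixpoint rlen (r : raw) : nat :=
  match r with
  | rleaf _ => 0
  | rnode n P s c => (\sum_(i < n) (rlen (c i)).*2).+1
  end.

Definition rval (n m : nat) (c : 'I_n -> raw) (d : 'I_m -> raw) (u : 'I_n + 'I_m) : raw :=
  match u with inl i => c i | inr j => d j end.

Fixpoint rleq_f (k : nat) (s t : raw) {struct k} : Prop :=
  match k with
  | 0 => False
  | k'.+1 =>
    match s, t with
    | rleaf x, rleaf y => ple x y
    | rleaf _, rnode m Q tau d => exists j, rleq_f k' s (d j)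
    | rnode _ _ _ _, rleaf _ => False
    | rnode n P sig c, rnode m Q tau d =>
        (exists j, rleq_f k' s (d j))
        \/
        (let R := fun u v => rleq_f k' (rval c d u) (rval c d v) in
         exists (Hr : forall u, R u u)
                (Ht : forall u v w, R u v -> R v w -> R u w)
                (fa : qemb (PO_of_fin P) (quotPO Hr Ht))
                (fb : qemb (PO_of_fin Q) (quotPO Hr Ht)),
           (forall i, proj1_sig (fa i) = qclass R (inl i)) /\
           (forall j, proj1_sig (fb j) = qclass R (inr j)) /\
           ple (Wmor W fa sig) (Wmor W fb tau))
    end
  end.

Definition rleq (s t : raw) : Prop := rleq_f (rlen s + rlen t).+1 s t.

Fixpoint rwf (r : raw) : Prop :=
  match r with
  | rleaf _ => True
  | rnode n P s c =>
      (forall i, rwf (c i)) /\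
      (forall i j, frel P i j <-> rleq (c i) (c j)) /\
      (forall i, supp W s i)
  end.

Definition TWA : Type := {r : raw | rwf r}.
Definition TWR (a b : TWA) : Prop := rleq (proj1_sig a) (proj1_sig b).

Definition TWcar : Type := qcar TWR.

Definition TW (Hr : forall a, TWR a a)
              (Ht : forall a b c, TWR a b -> TWR b c -> TWR a c) : PO :=
  quotPO Hr Ht.

Definition cls (r : raw) : TWA -> Prop := fun b => rleq r (proj1_sig b) /\ rleq (proj1_sig b) r.

Definition iotaTW (x : X) : TWcar :=
  exist _ (cls (rleaf x)) (ex_intro _ (exist rwf (rleaf x) I) erefl).

(* kappa_X(sigma) = circ(a, sigma_0) where sigma =_NF W(iota_a)(sigma_0) *)
Definition kappaTW_spec (Hr : forall a, TWR a a)
    (Ht : forall a b c, TWR a b -> TWR b c -> TWR a c)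
    (s : W (TW Hr Ht)) (S : TWcar) : Prop :=
  exists (n : nat) (P : finPO n) (s0 : W (PO_of_fin P)) (c : 'I_n -> raw),
    rwf (rnode s0 c) /\
    exists e : qemb (PO_of_fin P) (TW Hr Ht),
      (forall i, proj1_sig (e i) = cls (c i)) /\
      Wmor W e s0 = s /\
      proj1_sig S = cls (rnode s0 c).

End TW.

From Stdlib Require Import FunctionalExtensionality PropExtensionality ProofIrrelevance.
From Stdlib Require Import Classical ClassicalEpsilon.
From mathcomp Require Import ssreflect ssrfun ssrbool ssrnat fintype bigop.
From mathcomp Require Import zify.

Set Implicit Arguments.
Unset Strict Implicit.
Unset Printing Implicit Defensive.

(* Terms of TW(X) are raw trees taken up to mutual comparability, which absorbs the
   choice of an enumeration of the set a in o(a, sigma).  Clause (iii') compares sigma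
   and tau in W applied to the quotient of the disjoint union of the two child index
   sets.  Whenever that preorder is induced by a map into a partial order Y, W maps the
   induced map out of the quotient to an embedding, so (iii') amounts to comparing the
   images of sigma and tau in W(Y); with Y = TW(X) this gives the fixed point equations,
   and with Y the quotient of the children of three terms it gives transitivity.
   Normality of W puts each child of a term below everything the term lies below, so
   the height is monotone and mutually comparable nodes are related by (iii').  The
   morphism into another Kruskal fixed point is defined by structural recursion on raw
   trees; by induction on the length it reflects the order and is constant on classes,
   and it is unique because every element of TW(X) is iota x or kappa sigma. *)

Lemma qemb_ext (X Y : PO) (f g : qemb X Y) : (forall x, f x = g x) -> f = g.
Proof.
case: f g => f Hf [g Hg] /= /functional_extensionality E; subst g.
by rewrite (proof_irrelevance _ Hf Hg).
Qed.

Lemma embedding_inj (X Y : PO) (f : X -> Y) : embedding f -> injective f.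
Proof. by move=> Hf x y E; apply: ple_antisym; apply/Hf; rewrite E; apply: ple_refl. Qed.

Lemma Wmor_comp_ext (W : PO_dilator) (X Y Z : PO) (g : qemb Y Z) (f : qemb X Y)
    (e : qemb X Z) (s : W X) :
  (forall x, g (f x) = e x) -> Wmor W g (Wmor W f s) = Wmor W e s.
Proof. by move=> E; rewrite -Wmor_comp; congr (Wmor W _ s); apply: qemb_ext. Qed.

Lemma finite_set_enum (T : Type) (A : T -> Prop) : finite_set A ->
  exists n (g : 'I_n -> T), injective g /\ forall x, A x <-> exists i, g i = x.
Proof.
move=> [l]; elim: l A => [|y l IH] A Al.
  exists 0, (fun i : 'I_0 => False_rect T (notF (ltn_ord i))).
  by split=> [[]|x] //; split=> [/Al|[[]]].
have [n [g [g_inj gA]]] : exists n (g : 'I_n -> T),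
    injective g /\ forall x, A x /\ x <> y <-> exists i, g i = x.
  by apply: IH => x [/Al [->|]].
have g_neq_y i : g i <> y by have [] := proj2 (gA (g i)) (ex_intro _ i erefl).
case: (classic (A y)) => [Ay|nAy]; last first.
  exists n, g; split=> // x; rewrite -gA.
  by split=> [Ax|[]//]; split=> // Exy; subst.
pose g' i := if unlift ord0 i is Some j then g j else y.
have g'_lift j : g' (lift ord0 j) = g j by rewrite /g' liftK.
have g'_0 : g' ord0 = y by rewrite /g' unlift_none.
exists n.+1, g'; split.
  move=> i1 i2; case: (unliftP ord0 i1) => [j1|] ->; case: (unliftP ord0 i2) => [j2|] ->;
    rewrite ?g'_lift ?g'_0 //.
  - by move/g_inj ->.
  - by move/g_neq_y.
  - by move=> E; case: (g_neq_y j2).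
move=> x; split=> [Ax|[i <-]].
  case: (classic (x = y)) => [->|ne]; first by exists ord0.
  by have [j <-] := proj1 (gA x) (conj Ax ne); exists (lift ord0 j).
case: (unliftP ord0 i) => [j|] ->; rewrite ?g'_lift ?g'_0 //.
by case: (proj2 (gA (g j))); first by exists j.
Qed.

Section Quotient.
Variables (A : Type) (R : A -> A -> Prop).

Definition qproj (a : A) : qcar R := exist _ (qclass R a) (ex_intro _ a erefl).

Lemma qcar_val_inj (S T : qcar R) : proj1_sig S = proj1_sig T -> S = T.
Proof. by case: S T => S HS [T HT] /= E; subst T; rewrite (proof_irrelevance _ HS HT). Qed.

Lemma qproj_of_class (S : qcar R) a : proj1_sig S = qclass R a -> S = qproj a.
Proof. by move=> E; apply: qcar_val_inj. Qed.

Definition qrepr (S : qcar R) : A :=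
  proj1_sig (constructive_indefinite_description _ (proj2_sig S)).

Lemma qreprK (S : qcar R) : qproj (qrepr S) = S.
Proof.
apply: esym; apply: qproj_of_class; rewrite /qrepr.
by case: constructive_indefinite_description.
Qed.

Hypotheses (Rr : forall a, R a a) (Rt : forall a b c, R a b -> R b c -> R a c).

Lemma qle_proj a b : @qle A R (qproj a) (qproj b) <-> R a b.
Proof.
split=> [[a' [b' [[aa' _] [[_ b'b] a'b']]]]|ab]; first exact: Rt aa' (Rt a'b' b'b).
by exists a, b; split; [|split]; rewrite /qclass; auto.
Qed.

Lemma qproj_eq a b : qproj a = qproj b <-> R a b /\ R b a.
Proof.
split=> [E|[ab ba]].
  by split; apply/qle_proj; rewrite E; apply: qle_refl.
apply: qcar_val_inj; apply: functional_extensionality => x /=.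
apply: propositional_extensionality; rewrite /qclass.
by split=> [[ax xa]|[bx xb]]; split; eauto.
Qed.

Definition qmap (Y : PO) (g : Y -> A) (Hg : forall y y', R (g y) (g y') -> ple y y') :
  qemb Y (quotPO Rr Rt) :=
  @QEmb Y (quotPO Rr Rt) (fun y => qproj (g y)) (fun y y' H => Hg y y' (proj1 (qle_proj _ _) H)).

Section Lift.
Variables (Y : PO) (phi : A -> Y).

Definition qlift (S : qcar R) : Y := phi (qrepr S).

Lemma qlift_quasi : (forall a b, ple (phi a) (phi b) -> R a b) ->
  @quasi_emb (quotPO Rr Rt) Y qlift.
Proof. by move=> Hq S T /Hq H; rewrite -(qreprK S) -(qreprK T); apply/qle_proj. Qed.

Lemma qlift_emb : (forall a b, R a b <-> ple (phi a) (phi b)) ->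
  @embedding (quotPO Rr Rt) Y qlift.
Proof. by move=> Hphi S T; rewrite /= /qlift -Hphi -qle_proj !qreprK. Qed.

Definition qlift_qemb (Hq : forall a b, ple (phi a) (phi b) -> R a b) :
  qemb (quotPO Rr Rt) Y := QEmb (qlift_quasi Hq).

Hypothesis phi_resp : forall a b, R a b -> R b a -> phi a = phi b.

Lemma qlift_proj a : qlift (qproj a) = phi a.
Proof. by have /qproj_eq [? ?] := qreprK (qproj a); apply: phi_resp. Qed.

Lemma Wmor_qlift_qmap (W : PO_dilator) (Hq : forall a b, ple (phi a) (phi b) -> R a b)
    (Y0 : PO) (g : Y0 -> A) (Hg : forall y y', R (g y) (g y') -> ple y y')
    (h : qemb Y0 Y) (s : W Y0) :
  (forall y, h y = phi (g y)) -> Wmor W (qlift_qemb Hq) (Wmor W (@qmap Y0 g Hg) s) = Wmor W h s.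
Proof. by move=> h_phi; apply: Wmor_comp_ext => y; rewrite /= qlift_proj. Qed.

End Lift.
End Quotient.
Arguments qmap {A R} Rr Rt {Y} g Hg.
Arguments Wmor_qlift_qmap {A R} Rr Rt {Y phi} phi_resp {W} Hq {Y0 g} Hg {h s} h_phi.

Section UnionOrder.
Variables (W : PO_dilator) (n m : nat) (P : finPO n) (Q : finPO m).
Variables (sig : W (PO_of_fin P)) (tau : W (PO_of_fin Q)).
Variable R : 'I_n + 'I_m -> 'I_n + 'I_m -> Prop.

Definition union_le : Prop :=
  exists (Hr : forall u, R u u) (Ht : forall u v w, R u v -> R v w -> R u w)
         (fa : qemb (PO_of_fin P) (quotPO Hr Ht)) (fb : qemb (PO_of_fin Q) (quotPO Hr Ht)),
    (forall i, proj1_sig (fa i) = qclass R (inl i)) /\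
    (forall j, proj1_sig (fb j) = qclass R (inr j)) /\
    ple (Wmor W fa sig) (Wmor W fb tau).

Section Preorder.
Hypotheses (Rr : forall u, R u u) (Rt : forall u v w, R u v -> R v w -> R u w).

Lemma union_leE : union_le <->
  exists HP HQ, ple (Wmor W (qmap Rr Rt (fun i : PO_of_fin P => inl i) HP) sig)
                    (Wmor W (qmap Rr Rt (fun j : PO_of_fin Q => inr j) HQ) tau).
Proof.
split=> [[Rr' [Rt' [fa [fb [fa_cl [fb_cl le_st]]]]]]|[HP [HQ le_st]]]; last first.
  by exists Rr, Rt, (qmap Rr Rt _ HP), (qmap Rr Rt _ HQ).
rewrite (proof_irrelevance _ Rr' Rr) (proof_irrelevance _ Rt' Rt) in fa fb fa_cl fb_cl le_st *.
have fa_proj i : fa i = qproj R (inl i) by apply: qproj_of_class.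
have fb_proj j : fb j = qproj R (inr j) by apply: qproj_of_class.
have HP (i j : PO_of_fin P) : R (inl i) (inl j) -> ple i j.
  by move=> Rij; apply: (@qfun_quasi _ _ fa); rewrite !fa_proj; apply/qle_proj.
have HQ (i j : PO_of_fin Q) : R (inr i) (inr j) -> ple i j.
  by move=> Rij; apply: (@qfun_quasi _ _ fb); rewrite !fb_proj; apply/qle_proj.
exists HP, HQ.
have -> : qmap Rr Rt (fun i : PO_of_fin P => inl i) HP = fa by apply: qemb_ext.
have -> : qmap Rr Rt (fun j : PO_of_fin Q => inr j) HQ = fb by apply: qemb_ext.
exact: le_st.
Qed.

Lemma union_le_of_Wle (Z : PO) (psi : 'I_n + 'I_m -> Z)
    (psi_resp : forall u v, R u v -> R v u -> psi u = psi v)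
    (psi_quasi : forall u v, ple (psi u) (psi v) -> R u v)
    (h : qemb (PO_of_fin P) Z) (k : qemb (PO_of_fin Q) Z) :
  (forall i, h i = psi (inl i)) -> (forall j, k j = psi (inr j)) ->
  (forall i j : PO_of_fin P, R (inl i) (inl j) -> ple i j) ->
  (forall i j : PO_of_fin Q, R (inr i) (inr j) -> ple i j) ->
  ple (Wmor W h sig) (Wmor W k tau) -> union_le.
Proof.
move=> h_psi k_psi HP HQ le_st; apply/union_leE; exists HP, HQ; move: le_st.
rewrite -(Wmor_qlift_qmap Rr Rt psi_resp psi_quasi HP h_psi).
rewrite -(Wmor_qlift_qmap Rr Rt psi_resp psi_quasi HQ k_psi).
exact: qfun_quasi.
Qed.

End Preorder.

Section Induced.
Variables (Y : PO) (phi : 'I_n + 'I_m -> Y).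
Hypothesis Rphi : forall u v, R u v <-> ple (phi u) (phi v).
Variables (e1 : qemb (PO_of_fin P) Y) (e2 : qemb (PO_of_fin Q) Y).
Hypotheses (e1_phi : forall i, e1 i = phi (inl i)) (e2_phi : forall j, e2 j = phi (inr j)).

Let Rr u : R u u. Proof. exact/Rphi/ple_refl. Qed.
Let Rt u v w : R u v -> R v w -> R u w.
Proof. by move=> /Rphi uv /Rphi vw; apply/Rphi; apply: ple_trans uv vw. Qed.
Let phi_resp u v : R u v -> R v u -> phi u = phi v.
Proof. by move=> /Rphi uv /Rphi vu; apply: ple_antisym. Qed.
Let phi_quasi u v : ple (phi u) (phi v) -> R u v. Proof. by move/Rphi. Qed.
Let HP (i j : PO_of_fin P) : R (inl i) (inl j) -> ple i j.
Proof. by move/Rphi; rewrite -!e1_phi; apply: qfun_quasi. Qed.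
Let HQ (i j : PO_of_fin Q) : R (inr i) (inr j) -> ple i j.
Proof. by move/Rphi; rewrite -!e2_phi; apply: qfun_quasi. Qed.
Let L := qlift_qemb Rr Rt phi_quasi.
Let L_emb : embedding L. Proof. exact: qlift_emb. Qed.

Lemma union_le_iff_Wle : union_le <-> ple (Wmor W e1 sig) (Wmor W e2 tau).
Proof.
split=> [|]; last exact: union_le_of_Wle e1_phi e2_phi HP HQ.
move/(union_leE Rr Rt) => [HP' [HQ' le_st]].
rewrite -(Wmor_qlift_qmap Rr Rt phi_resp phi_quasi HP' e1_phi).
by rewrite -(Wmor_qlift_qmap Rr Rt phi_resp phi_quasi HQ' e2_phi) Wmor_emb.
Qed.

Lemma Wmor_eq_transfer (Z : PO) (psi : 'I_n + 'I_m -> Z)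
    (psi_resp : forall u v, R u v -> R v u -> psi u = psi v)
    (psi_quasi : forall u v, ple (psi u) (psi v) -> R u v)
    (h : qemb (PO_of_fin P) Z) (k : qemb (PO_of_fin Q) Z) :
  (forall i, h i = psi (inl i)) -> (forall j, k j = psi (inr j)) ->
  Wmor W e1 sig = Wmor W e2 tau -> Wmor W h sig = Wmor W k tau.
Proof.
move=> h_psi k_psi E.
rewrite -(Wmor_qlift_qmap Rr Rt psi_resp psi_quasi HP h_psi).
rewrite -(Wmor_qlift_qmap Rr Rt psi_resp psi_quasi HQ k_psi); congr (Wmor W _ _).
apply: (embedding_inj (Wmor_emb L_emb)).
rewrite (Wmor_qlift_qmap Rr Rt phi_resp phi_quasi HP e1_phi).
by rewrite (Wmor_qlift_qmap Rr Rt phi_resp phi_quasi HQ e2_phi).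
Qed.

End Induced.

Lemma union_le_normal : normal W -> union_le -> (forall i, supp W sig i) ->
  forall i, exists j, R (inl i) (inr j).
Proof.
move=> HW [Rr [Rt [fa [fb [fa_cl [fb_cl le_st]]]]]] supp_sig i.
have [|_ [/supp_nat [j [_ <-]] le_ij]] := HW _ _ _ le_st (fa i).
  by apply/supp_nat; exists i.
exists j; apply/(qle_proj Rr Rt).
by rewrite -(qproj_of_class (fa_cl i)) -(qproj_of_class (fb_cl j)).
Qed.

End UnionOrder.

Section RawOrder.
Variables (W : PO_dilator) (X : PO).
Local Notation raw := (raw W X).

Definition rval_le n m (c : 'I_n -> raw) (d : 'I_m -> raw) u v := rleq (rval c d u) (rval c d v).

Lemma rlen_child n (P : finPO n) (sig : W (PO_of_fin P)) (c : 'I_n -> raw) i :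
  rlen (c i) + rlen (c i) < rlen (rnode sig c).
Proof. by rewrite /= ltnS (bigD1 i) //= -addnn leq_addr. Qed.

Lemma rlen_rval n m (P : finPO n) (Q : finPO m) (sig : W (PO_of_fin P))
    (tau : W (PO_of_fin Q)) (c : 'I_n -> raw) (d : 'I_m -> raw) u v :
  rlen (rval c d u) + rlen (rval c d v) < rlen (rnode sig c) + rlen (rnode tau d).
Proof.
move: (rlen_child sig c) (rlen_child tau d) => Hc Hd.
case: u => i; case: v => j; cbn [rval];
  [move: (Hc i) (Hc j) | move: (Hc i) (Hd j) | move: (Hd i) (Hc j) | move: (Hd i) (Hd j)]; lia.
Qed.

Lemma rleq_f_leaf_node k x m (Q : finPO m) (tau : W (PO_of_fin Q)) (d : 'I_m -> raw) :
  rleq_f k.+1 (rleaf W x) (rnode tau d) = exists j, rleq_f k (rleaf W x) (d j).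
Proof. by []. Qed.

Lemma rleq_f_node_node k n m (P : finPO n) (Q : finPO m) (sig : W (PO_of_fin P))
    (tau : W (PO_of_fin Q)) (c : 'I_n -> raw) (d : 'I_m -> raw) :
  rleq_f k.+1 (rnode sig c) (rnode tau d) =
  ((exists j, rleq_f k (rnode sig c) (d j)) \/
   union_le sig tau (fun u v => rleq_f k (rval c d u) (rval c d v))).
Proof. by []. Qed.

Lemma rleq_f_fuel k k' (s t : raw) : rlen s + rlen t < k -> rlen s + rlen t < k' ->
  rleq_f k s t = rleq_f k' s t.
Proof.
elim: k k' s t => [|k IH] [|k'] s t // lt_k lt_k'.
have IH_child m (Q : finPO m) (tau : W (PO_of_fin Q)) (d : 'I_m -> raw) :
    rlen s + rlen (rnode tau d) < k.+1 -> rlen s + rlen (rnode tau d) < k'.+1 ->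
    (exists j, rleq_f k s (d j)) = (exists j, rleq_f k' s (d j)).
  move=> lt_sk lt_sk'; congr ex; apply: functional_extensionality => j.
  by apply: IH; have := rlen_child tau d j; lia.
case: s lt_k lt_k' IH_child => [x|n P sig c] lt_k lt_k' IH_child;
  case: t lt_k lt_k' => [y|m Q tau d] lt_k lt_k' //.
  by rewrite !rleq_f_leaf_node (IH_child _ _ tau d).
rewrite !rleq_f_node_node (IH_child _ _ tau d) //.
suff -> : (fun u v => rleq_f k (rval c d u) (rval c d v)) =
          (fun u v => rleq_f k' (rval c d u) (rval c d v)) by [].
apply: functional_extensionality => u; apply: functional_extensionality => v.
by apply: IH; have := rlen_rval sig tau c d u v; lia.
Qed.

Lemma rleq_fE k (s t : raw) : rlen s + rlen t < k -> rleq_f k s t = rleq s t.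
Proof. by move=> lt_k; apply: rleq_f_fuel. Qed.

Lemma rleq_node_node n m (P : finPO n) (Q : finPO m) (sig : W (PO_of_fin P))
    (tau : W (PO_of_fin Q)) (c : 'I_n -> raw) (d : 'I_m -> raw) :
  rleq (rnode sig c) (rnode tau d) <->
  (exists j, rleq (rnode sig c) (d j)) \/ union_le sig tau (rval_le c d).
Proof.
set k := rlen (rnode sig c) + rlen (rnode tau d).
rewrite /rleq -/k rleq_f_node_node.
have -> : (fun u v => rleq_f k (rval c d u) (rval c d v)) = rval_le c d.
  apply: functional_extensionality => u; apply: functional_extensionality => v.
  by apply: rleq_fE; apply: rlen_rval.
suff -> : (exists j, rleq_f k (rnode sig c) (d j)) = exists j, rleq (rnode sig c) (d j) by [].
congr ex; apply: functional_extensionality => j.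
by apply: rleq_fE; have := rlen_child tau d j; rewrite /k; lia.
Qed.

Lemma rleq_leaf_node x m (Q : finPO m) (tau : W (PO_of_fin Q)) (d : 'I_m -> raw) :
  rleq (rleaf W x) (rnode tau d) <-> exists j, rleq (rleaf W x) (d j).
Proof.
rewrite /rleq rleq_f_leaf_node.
suff -> : (exists j, rleq_f (rlen (rleaf W x) + rlen (rnode tau d)) (rleaf W x) (d j)) =
          exists j, rleq (rleaf W x) (d j) by [].
congr ex; apply: functional_extensionality => j.
by apply: rleq_fE; have := rlen_child tau d j; lia.
Qed.

Lemma rleq_node_leaf n (P : finPO n) (sig : W (PO_of_fin P)) (c : 'I_n -> raw) y :
  ~ rleq (rnode sig c) (rleaf W y).
Proof. by []. Qed.

Lemma rleq_leaf_leaf (x y : X) : rleq (rleaf W x) (rleaf W y) <-> ple x y.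
Proof. by []. Qed.

Lemma rleq_child_r (s : raw) m (Q : finPO m) (tau : W (PO_of_fin Q)) (d : 'I_m -> raw) j :
  rleq s (d j) -> rleq s (rnode tau d).
Proof.
case: s => [x|n P sig c] le_sd.
  by apply/rleq_leaf_node; exists j.
by apply/rleq_node_node; left; exists j.
Qed.

End RawOrder.
Arguments rleq_child_r {W X s m Q tau d j}.

Section WellFormed.
Variables (W : PO_dilator) (X : PO).
Hypothesis HW : normal W.
Local Notation raw := (raw W X).

Lemma rwf_node n (P : finPO n) (sig : W (PO_of_fin P)) (c : 'I_n -> raw) :
  rwf (rnode sig c) ->
  [/\ forall i, rwf (c i), forall i j, rleq (c i) (c j) -> frel P i j & forall i, supp W sig i].
Proof. by move=> /= [wc [HP supp_sig]]; split=> // i j /HP. Qed.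

Lemma rleq_inv_node (s : raw) m (Q : finPO m) (tau : W (PO_of_fin Q)) (d : 'I_m -> raw) :
  rleq s (rnode tau d) ->
  (exists j, rleq s (d j)) \/
  exists n (P : finPO n) (sig : W (PO_of_fin P)) (c : 'I_n -> raw),
    s = rnode sig c /\ union_le sig tau (rval_le c d).
Proof.
case: s => [x /rleq_leaf_node|n P sig c /rleq_node_node [|]]; [by left | by left |].
by right; exists n, P, sig, c.
Qed.

Lemma rleq_child_l m (Q : finPO m) (tau : W (PO_of_fin Q)) (d : 'I_m -> raw) (r : raw) j :
  rwf (rnode tau d) -> rwf r -> rleq (rnode tau d) r -> rleq (d j) r.
Proof.
move=> wt; elim: r => [z|l S rho e IH] wr; first by move/rleq_node_leaf.
have [we _ _] := rwf_node wr; have [_ _ supp_tau] := rwf_node wt.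
case/rleq_node_node => [[k le_tek]|le_union].
  exact: rleq_child_r (IH k (we k) le_tek).
have [k le_jk] := union_le_normal HW le_union supp_tau j.
exact: rleq_child_r le_jk.
Qed.

Section Domain.
Variable D : raw -> Prop.

Definition rleq_on (a b : {r | D r}) := rleq (proj1_sig a) (proj1_sig b).

Hypotheses (Dr : forall a, rleq_on a a)
  (Dt : forall a b c, rleq_on a b -> rleq_on b c -> rleq_on a c).

Definition child_qemb n (P : finPO n) (c : 'I_n -> raw) (Dc : forall i, D (c i))
    (HP : forall i j, rleq (c i) (c j) -> frel P i j) : qemb (PO_of_fin P) (quotPO Dr Dt) :=
  qmap Dr Dt (fun i : PO_of_fin P => exist D (c i) (Dc i)) HP.

Lemma union_le_children n m (P : finPO n) (Q : finPO m) (sig : W (PO_of_fin P))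
    (tau : W (PO_of_fin Q)) (c : 'I_n -> raw) (d : 'I_m -> raw)
    (Dc : forall i, D (c i)) (Dd : forall j, D (d j)) HP HQ :
  union_le sig tau (rval_le c d) <->
  ple (Wmor W (child_qemb Dc HP) sig) (Wmor W (child_qemb Dd HQ) tau).
Proof.
pose phi u : quotPO Dr Dt := qproj rleq_on
  (match u return {r | D r} with
   | inl i => exist D (c i) (Dc i)
   | inr j => exist D (d j) (Dd j)
   end).
apply: (@union_le_iff_Wle _ _ _ _ _ sig tau _ _ phi) => // u v.
by rewrite /= qle_proj //; case: u; case: v.
Qed.

Variables (n m l : nat) (P : finPO n) (Q : finPO m) (S : finPO l).
Variables (sig : W (PO_of_fin P)) (tau : W (PO_of_fin Q)) (rho : W (PO_of_fin S)).
Variables (c : 'I_n -> raw) (d : 'I_m -> raw) (e : 'I_l -> raw).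
Hypotheses (Dc : forall i, D (c i)) (Dd : forall j, D (d j)) (De : forall k, D (e k)).
Hypotheses (HP : forall i j, rleq (c i) (c j) -> frel P i j).
Hypotheses (HQ : forall i j, rleq (d i) (d j) -> frel Q i j).
Hypotheses (HS : forall i j, rleq (e i) (e j) -> frel S i j).

Lemma union_le_children_refl : union_le sig sig (rval_le c c).
Proof. by apply/(union_le_children sig sig Dc Dc HP HP); apply: ple_refl. Qed.

Lemma union_le_children_trans :
  union_le sig tau (rval_le c d) -> union_le tau rho (rval_le d e) ->
  union_le sig rho (rval_le c e).
Proof.
rewrite (union_le_children sig tau Dc Dd HP HQ) (union_le_children tau rho Dd De HQ HS).
by rewrite (union_le_children sig rho Dc De HP HS); apply: ple_trans.
Qed.

End Domain.

(* Bounding each length by M, rather than their sum, lets the children of any three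
   terms live in one preorder, namely the terms of length below M. *)
Definition rsmall M (r : raw) := rwf r /\ rlen r < M.
Definition rleq_refl_below M := forall s, rsmall M s -> rleq s s.
Definition rleq_trans_below M := forall s t r,
  rsmall M s -> rsmall M t -> rsmall M r -> rleq s t -> rleq t r -> rleq s r.

Lemma rsmallW M r : rsmall M r -> rsmall M.+1 r.
Proof. by case=> wr lt_r; split=> //; apply: ltnW. Qed.

Lemma rsmall_child M n (P : finPO n) (sig : W (PO_of_fin P)) (c : 'I_n -> raw) i :
  rsmall M.+1 (rnode sig c) -> rsmall M (c i).
Proof. by case=> /rwf_node [wc _ _] lt_s; split=> //; have := rlen_child sig c i; lia. Qed.

Section Step.
Variable M : nat.
Hypotheses (reflM : rleq_refl_below M) (transM : rleq_trans_below M).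

Let Dr (a : {r | rsmall M r}) : rleq_on a a.
Proof. exact: reflM (proj2_sig a). Qed.
Let Dt (a b c : {r | rsmall M r}) : rleq_on a b -> rleq_on b c -> rleq_on a c.
Proof. exact: transM (proj2_sig a) (proj2_sig b) (proj2_sig c). Qed.

Lemma rleq_refl_below_S : rleq_refl_below M.+1.
Proof.
move=> [x|n P sig c] small_s; first exact: ple_refl.
have [_ HP _] := rwf_node (proj1 small_s).
apply/rleq_node_node; right.
exact (union_le_children_refl Dr Dt sig (fun i => rsmall_child i small_s) HP).
Qed.

Lemma rleq_trans_below_S : rleq_trans_below M.+1.
Proof.
suff: forall N s t r, rlen s + rlen t + rlen r < N ->
    rsmall M.+1 s -> rsmall M.+1 t -> rsmall M.+1 r -> rleq s t -> rleq t r -> rleq s r.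
  by move=> H s t r; apply: H (ltnSn _).
elim=> // N IHN s t r lt_N small_s small_t small_r.
case: t lt_N small_t => [y|m Q tau d] lt_N small_t le_st le_tr.
  case: s lt_N small_s le_st => [x|n P sig c] lt_N small_s le_st; last first.
    by case: (rleq_node_leaf le_st).
  case: r lt_N small_r le_tr => [z|l S rho e] lt_N small_r le_tr.
    exact: ple_trans le_st le_tr.
  have [k le_yk] := proj1 (rleq_leaf_node _ _ _) le_tr.
  have small_ek := rsmallW (rsmall_child k small_r).
  apply: rleq_child_r (IHN _ _ _ _ small_s small_t small_ek le_st le_yk).
  by have := rlen_child rho e k; lia.
case/rleq_inv_node: (le_st) => [[j le_sd]|[n [P [sig [c [Es le_cd]]]]]].
  have small_dj := rsmallW (rsmall_child j small_t).
  apply: (IHN _ _ _ _ small_s small_dj small_r le_sd).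
    by have := rlen_child tau d j; lia.
  exact: rleq_child_l j (proj1 small_t) (proj1 small_r) le_tr.
subst s; case: r lt_N small_r le_tr => [z|l S rho e] lt_N small_r; first by move/rleq_node_leaf.
case/rleq_node_node => [[k le_te]|le_de].
  have small_ek := rsmallW (rsmall_child k small_r).
  apply: rleq_child_r (IHN _ _ _ _ small_s small_t small_ek le_st le_te).
  by have := rlen_child rho e k; lia.
apply/rleq_node_node; right.
have [_ HP _] := rwf_node (proj1 small_s); have [_ HQ _] := rwf_node (proj1 small_t).
have [_ HS _] := rwf_node (proj1 small_r).
exact (union_le_children_trans Dr Dt (fun i => rsmall_child i small_s)
  (fun j => rsmall_child j small_t) (fun k => rsmall_child k small_r) HP HQ HS le_cd le_de).
Qed.

End Step.

Lemma rleq_preorder_below M : rleq_refl_below M /\ rleq_trans_below M.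
Proof.
elim: M => [|M [reflM transM]]; first by split=> [? []|? ? ? []] //.
by split; [apply: rleq_refl_below_S | apply: rleq_trans_below_S].
Qed.

Lemma rleq_refl (s : raw) : rwf s -> rleq s s.
Proof. by move=> ws; apply: (proj1 (rleq_preorder_below (rlen s).+1)). Qed.

Lemma rleq_trans (s t r : raw) : rwf s -> rwf t -> rwf r -> rleq s t -> rleq t r -> rleq s r.
Proof.
move=> ws wt wr; apply: (proj2 (rleq_preorder_below (rlen s + rlen t + rlen r).+1));
  by split=> //; lia.
Qed.

Fixpoint rht (r : raw) : nat :=
  if r is rnode n _ _ c then (\max_(i < n) rht (c i)).+1 else 0.

Lemma rht_child n (P : finPO n) (sig : W (PO_of_fin P)) (c : 'I_n -> raw) i :
  rht (c i) < rht (rnode sig c).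
Proof. by rewrite /= ltnS; apply: (leq_bigmax (F := fun i => rht (c i))). Qed.

Lemma rht_mono (s t : raw) : rwf s -> rwf t -> rleq s t -> rht s <= rht t.
Proof.
elim: t s => [y|m Q tau d IH] [x|n P sig c] ws wt //.
have [wd _ _] := rwf_node wt; have [wc _ supp_sig] := rwf_node ws.
case/rleq_node_node => [[j le_sd]|le_cd].
  by apply: leq_trans (IH j _ ws (wd j) le_sd) (ltnW (rht_child tau d j)).
rewrite /= ltnS; apply/bigmax_leqP => i _.
have [j le_cd_ij] := union_le_normal HW le_cd supp_sig i.
apply: leq_trans (leq_bigmax (F := fun j => rht (d j)) j).
exact: IH j _ (wc i) (wd j) le_cd_ij.
Qed.

Lemma rleq_antisym_union n m (P : finPO n) (Q : finPO m) (sig : W (PO_of_fin P))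
    (tau : W (PO_of_fin Q)) (c : 'I_n -> raw) (d : 'I_m -> raw) :
  rwf (rnode sig c) -> rwf (rnode tau d) ->
  rleq (rnode sig c) (rnode tau d) -> rleq (rnode tau d) (rnode sig c) ->
  union_le sig tau (rval_le c d).
Proof.
move=> ws wt le_st le_ts; have [wc _ _] := rwf_node ws; have [wd _ _] := rwf_node wt.
case/rleq_node_node: (le_st) => [[j le_sd]|//].
have := rht_mono wt ws le_ts; have := rht_mono ws (wd j) le_sd.
by have := rht_child tau d j; lia.
Qed.

End WellFormed.

Lemma Wmor_normal_form (W : PO_dilator) (Y : PO) (s : W Y) :
  exists n (P : finPO n) (e : qemb (PO_of_fin P) Y) (s0 : W (PO_of_fin P)),
    [/\ embedding e, Wmor W e s0 = s & forall i, supp W s0 i].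
Proof.
have [n [g [g_inj supp_g]]] := finite_set_enum (supp_finite s).
pose P := @Build_finPO n (fun i j => ple (g i) (g j)) (fun i => ple_refl _)
  (fun i j k => @ple_trans _ _ _ _) (fun i j le_ij le_ji => g_inj _ _ (ple_antisym le_ij le_ji)).
pose e := @QEmb (PO_of_fin P) Y g (fun i j le_ij => le_ij).
have e_emb : embedding e by [].
have [s0 e_s0] := proj2 (supp_rng e_emb s) (fun y => proj1 (supp_g y)).
exists n, P, e, s0; split=> // i.
have : supp W s (g i) by apply/supp_g; exists i.
by rewrite -e_s0 => /supp_nat [j [supp_j /g_inj <-]].
Qed.

Section TermSystem.
Variables (W : PO_dilator) (X : PO).
Hypothesis HW : normal W.
Local Notation raw := (raw W X).

Definition TW_refl (a : TWA W X) : TWR a a := rleq_refl HW (proj2_sig a).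
Definition TW_trans (a b c : TWA W X) : TWR a b -> TWR b c -> TWR a c :=
  rleq_trans HW (proj2_sig a) (proj2_sig b) (proj2_sig c).

Local Notation TWo := (TW TW_refl TW_trans).

Definition tw (r : raw) (w : rwf r) : TWo := qproj (@TWR W X) (exist _ r w).

Lemma tw_le (r s : raw) (wr : rwf r) (ws : rwf s) : ple (tw wr) (tw ws) <-> rleq r s.
Proof. exact: (qle_proj TW_refl TW_trans). Qed.

Lemma tw_eq (r s : raw) (wr : rwf r) (ws : rwf s) : tw wr = tw ws <-> rleq r s /\ rleq s r.
Proof. exact: (qproj_eq TW_refl TW_trans). Qed.

Lemma tw_of_cls (S : TWo) (r : raw) (w : rwf r) : proj1_sig S = cls r -> S = tw w.
Proof. by move=> E; apply: qproj_of_class. Qed.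

Lemma tw_irrelevance (r : raw) (w w' : rwf r) : tw w = tw w'.
Proof. by rewrite (proof_irrelevance _ w w'). Qed.

Lemma iotaTW_tw x : iotaTW W x = @tw (rleaf W x) I.
Proof. by []. Qed.

Lemma tw_reprK (S : TWo) : tw (proj2_sig (qrepr S)) = S.
Proof. by move: (qreprK S); case: (qrepr S). Qed.

Definition tw_children n (P : finPO n) (c : 'I_n -> raw) (wc : forall i, rwf (c i))
    (HP : forall i j, rleq (c i) (c j) -> frel P i j) : qemb (PO_of_fin P) TWo :=
  child_qemb TW_refl TW_trans wc HP.

Lemma tw_childrenE n (P : finPO n) c wc HP i : @tw_children n P c wc HP i = tw (wc i).
Proof. by []. Qed.

Lemma union_le_tw n m (P : finPO n) (Q : finPO m) (sig : W (PO_of_fin P))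
    (tau : W (PO_of_fin Q)) (c : 'I_n -> raw) (d : 'I_m -> raw) wc wd HP HQ :
  union_le sig tau (rval_le c d) <->
  ple (Wmor W (@tw_children n P c wc HP) sig) (Wmor W (@tw_children m Q d wd HQ) tau).
Proof. exact: union_le_children. Qed.

Lemma kappaTW_exists : exists ka : W TWo -> TWo, forall s, kappaTW_spec s (ka s).
Proof.
suff /(_ _) /constructive_indefinite_description spec :
    forall s : W TWo, exists S, kappaTW_spec s S.
  by exists (fun s => proj1_sig (spec s)) => s; apply: proj2_sig.
move=> s; have [n [P [e [s0 [e_emb e_s0 supp_s0]]]]] := Wmor_normal_form s.
pose c i := proj1_sig (qrepr (e i)).
pose wc i : rwf (c i) := proj2_sig (qrepr (e i)).
have e_tw i : e i = tw (wc i) by rewrite /wc tw_reprK.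
have wn : rwf (rnode s0 c).
  split=> //; split=> // i j.
  by rewrite -(tw_le (wc i) (wc j)) -!e_tw; apply: iff_sym; apply: e_emb.
by exists (tw wn), n, P, s0, c; split=> //; exists e; split=> // i; rewrite e_tw.
Qed.

Lemma fin_le_tw_children (r : raw) (wr : rwf r) m (Q : finPO m) (tau : W (PO_of_fin Q))
    (d : 'I_m -> raw) wd HQ :
  (forall j, supp W tau j) ->
  fin_le (fun z => z = tw wr) (supp W (Wmor W (@tw_children m Q d wd HQ) tau)) <->
  exists j, rleq r (d j).
Proof.
move=> supp_tau; split=> [le_r|[j le_rd] _ ->].
  have [_ [/supp_nat [j [_ <-]] /tw_le le_rd]] := le_r _ erefl.
  by exists j.
by exists (tw_children wd HQ j); split; [apply/supp_nat; exists j | apply/tw_le].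
Qed.

Section Kappa.
Variable ka : W TWo -> TWo.
Hypothesis Hka : forall s, kappaTW_spec s (ka s).

Lemma kappaTW_node (s : W TWo) :
  exists n (P : finPO n) (s0 : W (PO_of_fin P)) (c : 'I_n -> raw) (w : rwf (rnode s0 c))
    (wc : forall i, rwf (c i)) (HP : forall i j, rleq (c i) (c j) -> frel P i j),
    s = Wmor W (tw_children wc HP) s0 /\ ka s = tw w.
Proof.
have [n [P [s0 [c [w [e [e_cls [e_s0 ka_cls]]]]]]]] := Hka s.
have [wc HP _] := rwf_node w.
exists n, P, s0, c, w, wc, HP; split; last exact: tw_of_cls.
rewrite -e_s0; congr (Wmor W _ s0); apply: qemb_ext => i.
by rewrite tw_childrenE; apply: tw_of_cls.
Qed.

Lemma kappaTW_tw n (P : finPO n) (s0 : W (PO_of_fin P)) (c : 'I_n -> raw)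
    (w : rwf (rnode s0 c)) wc HP :
  ka (Wmor W (@tw_children n P c wc HP) s0) = tw w.
Proof.
have [n' [P' [s0' [c' [w' [wc' [HP' [E ->]]]]]]]] := kappaTW_node (Wmor W (tw_children wc HP) s0).
apply/tw_eq; split; apply/rleq_node_node; right; apply/union_le_tw; rewrite -E; exact: ple_refl.
Qed.

Lemma KruskalFP_TW : KruskalFP W (@iotaTW W X : X -> TWo) ka.
Proof.
split; [|split; [|split; [|split]]].
- move=> x s; have [n [P [s0 [c [w [wc [HP [_ ->]]]]]]]] := kappaTW_node s.
  by rewrite iotaTW_tw => /tw_eq [_ /rleq_node_leaf].
- by move=> x y; rewrite !iotaTW_tw => /tw_le.
- move=> x t; have [m [Q [t0 [d [w [wd [HQ [-> ->]]]]]]]] := kappaTW_node t.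
  have [_ _ supp_t0] := rwf_node w.
  by rewrite iotaTW_tw tw_le rleq_leaf_node fin_le_tw_children.
- move=> s y; have [n [P [s0 [c [w [wc [HP [_ ->]]]]]]]] := kappaTW_node s.
  by rewrite iotaTW_tw => /tw_le /rleq_node_leaf.
- move=> s t; have [n [P [s0 [c [ws [wc [HP [Es ->]]]]]]]] := kappaTW_node s.
  have [m [Q [t0 [d [wt [wd [HQ [-> ->]]]]]]]] := kappaTW_node t.
  have [_ _ supp_t0] := rwf_node wt.
  rewrite tw_le rleq_node_node (union_le_tw _ _ wc wd HP HQ) fin_le_tw_children -?Es //.
  by split=> [[]|[]]; auto.
Qed.

End Kappa.
End TermSystem.

Lemma inhabited_of_not_quasi n (P : finPO n) (Z : PO) (h : 'I_n -> Z) :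
  ~ @quasi_emb (PO_of_fin P) Z h -> inhabited Z.
Proof.
by case: n P h => [|n] P h not_quasi; [case: not_quasi; case | exists; apply: h ord0].
Qed.

Section Initiality.
Variables (W : PO_dilator) (X : PO).
Hypothesis HW : normal W.
Local Notation raw := (raw W X).
Local Notation TWo := (TW (@TW_refl W X HW) (@TW_trans W X HW)).

Variables (Z : PO) (io : X -> Z) (ka : W Z -> Z).
Hypothesis HZ : KruskalFP W io ka.

Fixpoint rfold (r : raw) : Z :=
  match r with
  | rleaf x => io x
  | rnode n P s c =>
    match excluded_middle_informative (@quasi_emb (PO_of_fin P) Z (fun i => rfold (c i))) with
    | left h_quasi => ka (Wmor W (@QEmb (PO_of_fin P) Z (fun i => rfold (c i)) h_quasi) s)
    (* unreachable on well-formed terms, see [rfold_children_quasi] *)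
    | right h_not_quasi => epsilon (inhabited_of_not_quasi h_not_quasi) (fun _ => True)
    end
  end.

Lemma rfold_node n (P : finPO n) (s : W (PO_of_fin P)) (c : 'I_n -> raw)
    (h_quasi : @quasi_emb (PO_of_fin P) Z (fun i => rfold (c i))) :
  rfold (rnode s c) = ka (Wmor W (QEmb h_quasi) s).
Proof.
rewrite /=; case: excluded_middle_informative => [h_quasi'|//].
by rewrite (proof_irrelevance _ h_quasi h_quasi').
Qed.

Definition rfold_adequate (s t : raw) :=
  (ple (rfold s) (rfold t) -> rleq s t) /\ (rleq s t -> rleq t s -> rfold s = rfold t).

Lemma rfold_children_quasi n (P : finPO n) (s : W (PO_of_fin P)) (c : 'I_n -> raw) :
  rwf (rnode s c) -> (forall i j, rfold_adequate (c i) (c j)) ->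
  @quasi_emb (PO_of_fin P) Z (fun i => rfold (c i)).
Proof. by case/rwf_node=> _ HP _ good_c i j /(proj1 (good_c i j)) /HP. Qed.

Lemma rfold_adequate_leaf_leaf x y : rfold_adequate (rleaf W x) (rleaf W y).
Proof.
have [_ [io_quasi _]] := HZ; split; first exact: io_quasi.
by move=> /rleq_leaf_leaf le_xy /rleq_leaf_leaf le_yx; rewrite /= (ple_antisym le_xy le_yx).
Qed.

Lemma rfold_adequate_leaf_node x m (Q : finPO m) (tau : W (PO_of_fin Q)) (d : 'I_m -> raw) :
  rwf (rnode tau d) -> (forall i j, rfold_adequate (d i) (d j)) ->
  (forall j, rfold_adequate (rleaf W x) (d j)) -> rfold_adequate (rleaf W x) (rnode tau d).
Proof.
move=> wt good_d good_xd; have [_ [_ [io_le_ka _]]] := HZ.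
rewrite /rfold_adequate (rfold_node _ (rfold_children_quasi wt good_d)).
split=> [/io_le_ka le_x|_ /rleq_node_leaf //].
have [_ [/supp_nat [j [_ <-]] le_xd]] := le_x _ erefl.
exact: rleq_child_r (proj1 (good_xd j) le_xd).
Qed.

Lemma rfold_adequate_node_leaf n (P : finPO n) (sig : W (PO_of_fin P)) (c : 'I_n -> raw) y :
  rwf (rnode sig c) -> (forall i j, rfold_adequate (c i) (c j)) ->
  rfold_adequate (rnode sig c) (rleaf W y).
Proof.
move=> ws good_c; have [_ [_ [_ [ka_not_le_io _]]]] := HZ.
rewrite /rfold_adequate (rfold_node _ (rfold_children_quasi ws good_c)).
by split=> [/ka_not_le_io|/rleq_node_leaf].
Qed.

Lemma rfold_adequate_node_node n m (P : finPO n) (Q : finPO m) (sig : W (PO_of_fin P))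
    (tau : W (PO_of_fin Q)) (c : 'I_n -> raw) (d : 'I_m -> raw) :
  rwf (rnode sig c) -> rwf (rnode tau d) ->
  (forall u v, rfold_adequate (rval c d u) (rval c d v)) ->
  (forall j, rfold_adequate (rnode sig c) (d j)) ->
  rfold_adequate (rnode sig c) (rnode tau d).
Proof.
move=> ws wt good_cd good_sd; have [_ [_ [_ [_ ka_le]]]] := HZ.
have [wc HP _] := rwf_node ws; have [wd HQ _] := rwf_node wt.
have wcd u : rwf (rval c d u) by case: u.
have c_quasi := rfold_children_quasi ws (fun i j => good_cd (inl i) (inl j)).
have d_quasi := rfold_children_quasi wt (fun i j => good_cd (inr i) (inr j)).
have rfold_resp u v := proj2 (good_cd u v).
have rfold_reflect u v := proj1 (good_cd u v).
have Rr u : rval_le c d u u := rleq_refl HW (wcd u).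
have Rt u v w : rval_le c d u v -> rval_le c d v w -> rval_le c d u w :=
  rleq_trans HW (wcd u) (wcd v) (wcd w).
rewrite /rfold_adequate !rfold_node; split.
  case/ka_le=> [le_st|le_sd].
    apply/rleq_node_node; right.
    exact: (union_le_of_Wle Rr Rt rfold_resp rfold_reflect
             (h := QEmb c_quasi) (k := QEmb d_quasi)).
  have [_ [/supp_nat [j [_ <-]] le_s_dj]] := le_sd _ erefl.
  by apply: rleq_child_r (proj1 (good_sd j) _); rewrite (rfold_node _ c_quasi).
move=> le_st le_ts; congr ka.
have/(union_le_tw HW _ _ wc wd HP HQ) le_cd := rleq_antisym_union HW ws wt le_st le_ts.
have/(union_le_tw HW _ _ wd wc HQ HP) le_dc := rleq_antisym_union HW wt ws le_ts le_st.
have tw_Rphi u v : rval_le c d u v <-> ple (tw HW (wcd u)) (tw HW (wcd v)) by rewrite tw_le.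
apply: (Wmor_eq_transfer tw_Rphi _ _ rfold_resp rfold_reflect) (ple_antisym le_cd le_dc) => //.
  by move=> i; apply: tw_irrelevance.
by move=> j; apply: tw_irrelevance.
Qed.

Lemma rfold_adequate_wf (s t : raw) : rwf s -> rwf t -> rfold_adequate s t.
Proof.
move: {2}(rlen s + rlen t).+1 (ltnSn (rlen s + rlen t)) => N.
elim: N s t => // N IHN s t lt_N ws wt.
case: s lt_N ws => [x|n P sig c] lt_N ws; case: t lt_N wt => [y|m Q tau d] lt_N wt.
- exact: rfold_adequate_leaf_leaf.
- have [wd _ _] := rwf_node wt.
  apply: rfold_adequate_leaf_node => // [i j|j]; apply: IHN => //.
    by have := rlen_child tau d i; have := rlen_child tau d j; move: lt_N => /=; lia.
  by have := rlen_child tau d j; move: lt_N => /=; lia.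
- have [wc _ _] := rwf_node ws.
  apply: rfold_adequate_node_leaf => // i j; apply: IHN => //;
    by have := rlen_child sig c i; have := rlen_child sig c j; move: lt_N => /=; lia.
- have [wc _ _] := rwf_node ws; have [wd _ _] := rwf_node wt.
  apply: rfold_adequate_node_node => // [u v|j]; apply: IHN => //.
  + by have := rlen_rval sig tau c d u v; lia.
  + by case: u.
  + by case: v.
  + by have := rlen_child tau d j; lia.
Qed.

Definition fold_TW (S : TWo) : Z := rfold (proj1_sig (qrepr S)).

Lemma fold_TW_tw (r : raw) (w : rwf r) : fold_TW (tw HW w) = rfold r.
Proof.
rewrite /fold_TW; have := tw_reprK (tw HW w).
case: (qrepr _) => r' w' /= /tw_eq [le_r'r le_rr'].
exact: (proj2 (rfold_adequate_wf w' w)).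
Qed.

Lemma fold_TW_quasi : @quasi_emb TWo Z fold_TW.
Proof.
move=> S T; rewrite -(tw_reprK S) -(tw_reprK T) !fold_TW_tw tw_le.
exact: (proj1 (rfold_adequate_wf (proj2_sig (qrepr S)) (proj2_sig (qrepr T)))).
Qed.

Definition fold_TW_qemb : qemb TWo Z := QEmb fold_TW_quasi.

Section KappaTW.
Variable kaTW : W TWo -> TWo.
Hypothesis HkaTW : forall s, kappaTW_spec s (kaTW s).

Lemma rfold_node_wf n (P : finPO n) (s0 : W (PO_of_fin P)) (c : 'I_n -> raw)
    (w : rwf (rnode s0 c)) wc HP :
  rfold (rnode s0 c) = ka (Wmor W fold_TW_qemb (Wmor W (@tw_children _ _ HW n P c wc HP) s0)).
Proof.
have c_quasi := rfold_children_quasi w (fun i j => rfold_adequate_wf (wc i) (wc j)).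
rewrite (rfold_node _ c_quasi); congr ka; apply: esym; apply: Wmor_comp_ext => i.
exact: fold_TW_tw.
Qed.

Lemma fold_TW_kappa s : fold_TW (kaTW s) = ka (Wmor W fold_TW_qemb s).
Proof.
have [n [P [s0 [c [w [wc [HP [-> ->]]]]]]]] := kappaTW_node HkaTW s.
by rewrite fold_TW_tw (rfold_node_wf w).
Qed.

Lemma fold_TW_unique (g : qemb TWo Z) :
  (forall x, g (iotaTW W x) = io x) -> (forall s, g (kaTW s) = ka (Wmor W g s)) ->
  forall S, g S = fold_TW S.
Proof.
move=> g_io g_ka S; rewrite -(tw_reprK S) fold_TW_tw.
elim: (proj1_sig (qrepr S)) (proj2_sig (qrepr S)) => [x|n P s0 c IH] w.
  by rewrite (tw_irrelevance HW w I) -iotaTW_tw g_io.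
have [wc HP _] := rwf_node w.
rewrite -(kappaTW_tw HkaTW w wc HP) g_ka (rfold_node_wf w wc HP); congr ka.
rewrite -!Wmor_comp; congr (Wmor W _ _); apply: qemb_ext => i /=.
by rewrite fold_TW_tw IH.
Qed.

End KappaTW.
End Initiality.

Lemma KruskalFP_initial_TW (W : PO_dilator) (HW : normal W) (X : PO)
    (ka : W (TW (TW_refl HW) (TW_trans HW)) -> TW (TW_refl HW) (TW_trans HW)) :
  (forall s, kappaTW_spec s (ka s)) ->
  KruskalFP_initial W (@iotaTW W X : X -> TW (TW_refl HW) (TW_trans HW)) ka.
Proof.
move=> Hka Z io' ka' HZ; exists (fold_TW_qemb HW HZ); split; last exact: fold_TW_unique.
by split=> [x|s]; [rewrite /= iotaTW_tw fold_TW_tw | apply: fold_TW_kappa].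
Qed.

Theorem corollary3p6 (W : PO_dilator) (HW : normal W) (X : PO) :
  exists (Hr : forall a : TWA W X, TWR a a)
         (Ht : forall a b c : TWA W X, TWR a b -> TWR b c -> TWR a c),
    (exists ka : W (TW Hr Ht) -> TW Hr Ht, forall s, kappaTW_spec s (ka s)) /\
    (forall ka : W (TW Hr Ht) -> TW Hr Ht,
        (forall s, kappaTW_spec s (ka s)) ->
        KruskalFP W (@iotaTW W X : X -> TW Hr Ht) ka /\
        KruskalFP_initial W (@iotaTW W X : X -> TW Hr Ht) ka).
Proof.
exists (TW_refl HW), (TW_trans HW); split; first exact: kappaTW_exists.
by move=> ka Hka; split; [apply: KruskalFP_TW | apply: KruskalFP_initial_TW].
Qed.
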